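(* Let $N,S,d\ge 1$, $\alpha\in(0,1)$, let $\overline{C}_1,\dots,\overline{C}_S\in\mathbb{R}^{N\times N}$ be symmetric, $\overline{A}_1,\dots,\overline{A}_S\in\mathbb{R}^{N\times d}$, and $h\in\Sigma_N$, with $D_h=\mathrm{diag}(h)$. For $w\in\Sigma_S$ set $\widetilde{C}(w) = \sum_s w_s\overline{C}_s$ and $\widetilde{A}(w)=\sum_s w_s\overline{A}_s$. Define $M_1,M_2\in\mathbb{R}^{S\times S}$ by $(M_1)_{pq} = \langle D_h\overline{C}_p, \overline{C}_q D_h\rangle_F$ and $(M_2)_{pq} = \langle D_h^{1/2}\overline{A}_p, D_h^{1/2}\overline{A}_q\rangle_F$. Then $M_1$, $M_2$ and $M_\alpha := \alpha M_1 + (1-\alpha)M_2$ are positive semi-definite, hence $\|x\|_{M_\alpha}=\sqrt{x^\top M_\alpha x}$ induces a Mahalanobis (pseudo-)distance on $\mathbb{R}^S$, and for all $w^{(1)},w^{(2)}\in\Sigma_S$, $$FGW_{2,\alpha}\big(\widetilde{C}(w^{(1)}),\widetilde{A}(w^{(1)}),\widetilde{C}(w^{(2)}),\widetilde{A}(w^{(2)}),h,h\big)\le \|w^{(1)}-w^{(2)}\|_{M_\alpha}.$$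
   Context: $\Sigma_N = \{h \in \mathbb{R}_+^N : \sum_i h_i = 1\}$; $\mathcal{U}(h,h)=\{T\in\mathbb{R}_+^{N\times N}: T\mathbf{1}_N=h,\ T^\top\mathbf{1}_N=h\}$. For symmetric $C^X,C^Y\in\mathbb{R}^{N\times N}$ and feature matrices $A^X,A^Y\in\mathbb{R}^{N\times d}$ with rows $a^X_i,a^Y_j$, the Fused Gromov–Wasserstein distance with squared Euclidean feature cost is $FGW_{2,\alpha}(C^X,A^X,C^Y,A^Y,h,h) = \big(\min_{T\in\mathcal{U}(h,h)} (1-\alpha)\sum_{i,j}\|a^X_i-a^Y_j\|_2^2T_{ij} + \alpha\sum_{i,j,k,l}(C^X_{ij}-C^Y_{kl})^2T_{ik}T_{jl}\big)^{1/2}$. $\langle A,B\rangle_F=\mathrm{tr}(A^\top B)$. *)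

From HB Require Import structures.
From mathcomp Require Import all_boot all_order all_algebra.
From mathcomp Require Import classical_sets reals.
Set Implicit Arguments. Unset Strict Implicit. Unset Printing Implicit Defensive.
Import Order.TTheory GRing.Theory Num.Theory.
Local Open Scope ring_scope.
Local Open Scope classical_set_scope.

Definition simplex (R : realType) (n : nat) : set 'cV[R]_n :=
  [set h : 'cV[R]_n | (forall i, 0 <= h i 0) /\ \sum_(i < n) h i 0 = 1].

Definition Dh (R : realType) (n : nat) (h : 'cV[R]_n) : 'M[R]_n := diag_mx h^T.
Definition Dh_sqrt (R : realType) (n : nat) (h : 'cV[R]_n) : 'M[R]_n :=
  diag_mx (\row_i Num.sqrt (h i 0)).

Definition frob (R : realType) (m n : nat) (A B : 'M[R]_(m, n)) : R := \tr (A^T *m B).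

Definition couplings (R : realType) (n : nat) (h : 'cV[R]_n) : set 'M[R]_n :=
  [set T : 'M[R]_n | (forall i j, 0 <= T i j) /\ T *m const_mx 1 = h /\ T^T *m const_mx 1 = h].

Definition fgw_cost (R : realType) (N d : nat) (alpha : R)
    (CX : 'M[R]_N) (AX : 'M[R]_(N, d)) (CY : 'M[R]_N) (AY : 'M[R]_(N, d))
    (T : 'M[R]_N) : R :=
  (1 - alpha) * \sum_(i < N) \sum_(j < N)
      ((\sum_(k < d) (AX i k - AY j k) ^+ 2) * T i j)
  + alpha * \sum_(i < N) \sum_(j < N) \sum_(k < N) \sum_(l < N)
      ((CX i j - CY k l) ^+ 2 * T i k * T j l).

(* FGW_{2,alpha} = (min over U(h,h) of the objective)^{1/2}; the minimum is
   written as an infimum (it is attained, U(h,h) being compact). *)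
Definition FGW2 (R : realType) (N d : nat) (alpha : R)
    (CX : 'M[R]_N) (AX : 'M[R]_(N, d)) (CY : 'M[R]_N) (AY : 'M[R]_(N, d))
    (h : 'cV[R]_N) : R :=
  Num.sqrt (inf [set fgw_cost alpha CX AX CY AY T | T in couplings h]).

Definition psd (R : realType) (n : nat) (M : 'M[R]_n) : Prop :=
  M^T = M /\ forall x : 'cV[R]_n, 0 <= (x^T *m M *m x) 0 0.

Definition mnorm (R : realType) (n : nat) (M : 'M[R]_n) (x : 'cV[R]_n) : R :=
  Num.sqrt ((x^T *m M *m x) 0 0).

Definition M1 (R : realType) (N S : nat) (Cb : 'I_S -> 'M[R]_N) (h : 'cV[R]_N)
  : 'M[R]_S := \matrix_(p, q) frob (Dh h *m Cb p) (Cb q *m Dh h).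

Definition M2 (R : realType) (N S d : nat) (Ab : 'I_S -> 'M[R]_(N, d))
  (h : 'cV[R]_N) : 'M[R]_S :=
  \matrix_(p, q) frob (Dh_sqrt h *m Ab p) (Dh_sqrt h *m Ab q).

Definition wsum (R : realType) (S m n : nat) (X : 'I_S -> 'M[R]_(m, n))
  (w : 'cV[R]_S) : 'M[R]_(m, n) := \sum_(s < S) w s 0 *: X s.

(* The diagonal coupling [Dh h] is admissible for every pair of weights, so
   FGW is at most the square root of its cost.  That cost is a quadratic form
   in [w1 - w2]: since [C~] and [A~] are linear in [w], the Gromov term is
   [sum_ij h_i h_j (C~(w1 - w2))_ij^2] and the feature term is
   [sum_ik h_i (A~(w1 - w2))_ik^2], which are exactly the quadratic forms of
   [M1] and [M2].  Both matrices are Gram matrices with nonnegative weights,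
   hence positive semi-definite, and so is their convex combination. *)

From mathcomp Require Import all_boot all_order all_algebra.
From mathcomp Require Import classical_sets reals.
From mathcomp Require Import ring.
Set Implicit Arguments. Unset Strict Implicit. Unset Printing Implicit Defensive.
Import Order.TTheory GRing.Theory Num.Theory.
Local Open Scope ring_scope.
Local Open Scope classical_set_scope.

Section QuadraticForms.
Variable R : realType.

Definition qform n (M : 'M[R]_n) (x : 'cV[R]_n) : R := (x^T *m M *m x) 0 0.

Lemma qformE n (M : 'M[R]_n) (x : 'cV[R]_n) :
  qform M x = \sum_p \sum_q x p 0 * M p q * x q 0.
Proof.
rewrite /qform mxE exchange_big; apply: eq_bigr => q _; rewrite mxE mulr_suml.
by apply: eq_bigr => p _; rewrite !mxE.
Qed.

Lemma qform_lincomb n (a b : R) (A B : 'M[R]_n) x :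
  qform (a *: A + b *: B) x = a * qform A x + b * qform B x.
Proof.
rewrite /qform mulmxDr mulmxDl -!scalemxAr -!scalemxAl.
by rewrite [LHS]mxE [X in X + _]mxE [X in _ + X]mxE.
Qed.

Lemma psd_lincomb n (a b : R) (A B : 'M[R]_n) :
  0 <= a -> 0 <= b -> psd A -> psd B -> psd (a *: A + b *: B).
Proof.
move=> a0 b0 [AT A0] [BT B0]; split; first by rewrite linearD /= !linearZ /= AT BT.
move=> x; rewrite -/(qform _ x) qform_lincomb.
by rewrite addr_ge0 // mulr_ge0 // ?A0 ?B0.
Qed.

Section Gram.
Variables (I : finType) (n : nat) (c : I -> R) (f : I -> 'I_n -> R).
Variable M : 'M[R]_n.
Hypothesis ME : forall p q, M p q = \sum_a c a * (f a p * f a q).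

Lemma qform_gram x : qform M x = \sum_a c a * (\sum_p x p 0 * f a p) ^+ 2.
Proof.
rewrite qformE.
transitivity (\sum_p \sum_q \sum_a c a * ((x p 0 * f a p) * (x q 0 * f a q))).
  apply: eq_bigr => p _; apply: eq_bigr => q _.
  rewrite ME mulr_sumr mulr_suml; apply: eq_bigr => a _; ring.
under eq_bigr => p _ do rewrite exchange_big.
rewrite exchange_big; apply: eq_bigr => a _.
rewrite expr2 mulr_suml mulr_sumr; apply: eq_bigr => p _.
by rewrite !mulr_sumr.
Qed.

Lemma gram_psd : (forall a, 0 <= c a) -> psd M.
Proof.
move=> c0; split.
  apply/matrixP => p q; rewrite mxE !ME.
  by apply: eq_bigr => a _; rewrite (mulrC (f a q)).
move=> x; rewrite -/(qform M x) qform_gram.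
by rewrite sumr_ge0 // => a _; rewrite mulr_ge0 ?sqr_ge0.
Qed.

End Gram.

End QuadraticForms.

Section FusedGromovWasserstein.
Variable R : realType.

Lemma frobE m n (A B : 'M[R]_(m, n)) :
  frob A B = \sum_(a : 'I_m * 'I_n) A a.1 a.2 * B a.1 a.2.
Proof.
rewrite -(pair_bigA _ (fun i j => A i j * B i j)) /frob /mxtrace exchange_big /=.
by apply: eq_bigr => j _; rewrite !mxE; apply: eq_bigr => i _; rewrite mxE.
Qed.

Lemma sum_kronecker n (F : 'I_n -> R) i : \sum_j F j *+ (i == j) = F i.
Proof.
rewrite (bigD1 i) //= eqxx mulr1n big1 ?addr0 // => j /negbTE.
by rewrite eq_sym => ->; rewrite mulr0n.
Qed.

Lemma DhE n (h : 'cV[R]_n) i j : Dh h i j = h i 0 *+ (i == j).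
Proof. by rewrite /Dh !mxE. Qed.

Lemma Dh_coupling n (h : 'cV[R]_n) : (forall i, 0 <= h i 0) -> couplings h (Dh h).
Proof.
move=> h0; have margin : Dh h *m const_mx 1 = h.
  by apply/matrixP => i j; rewrite (ord1 j) mul_diag_mx !mxE mulr1.
split; first by move=> i j; rewrite DhE mulrn_wge0.
by split; rewrite // /Dh tr_diag_mx.
Qed.

Section Cost.
Variables (N d : nat) (alpha : R).
Variables (CX CY : 'M[R]_N) (AX AY : 'M[R]_(N, d)) (h : 'cV[R]_N).

Lemma fgw_cost_ge0 T : 0 <= alpha <= 1 -> couplings h T ->
  0 <= fgw_cost alpha CX AX CY AY T.
Proof.
move=> /andP[a0 a1] [T0 _]; rewrite /fgw_cost addr_ge0 // mulr_ge0 ?subr_ge0 //.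
- do 2!(apply: sumr_ge0 => ? _).
  by rewrite mulr_ge0 // sumr_ge0 // => k _; rewrite sqr_ge0.
- by do 4!(apply: sumr_ge0 => ? _); rewrite mulr_ge0 // mulr_ge0 // sqr_ge0.
Qed.

Lemma FGW2_le_cost T : 0 <= alpha <= 1 -> couplings h T ->
  FGW2 alpha CX AX CY AY h <= Num.sqrt (fgw_cost alpha CX AX CY AY T).
Proof.
move=> a01 hT; rewrite ler_wsqrtr // ge_inf //; last by exists T.
by exists 0 => _ [T' hT' <-]; exact: fgw_cost_ge0.
Qed.

Lemma fgw_cost_Dh : fgw_cost alpha CX AX CY AY (Dh h) =
  (1 - alpha) * \sum_i \sum_k h i 0 * (AX i k - AY i k) ^+ 2
  + alpha * \sum_i \sum_j (h i 0 * h j 0) * (CX i j - CY i j) ^+ 2.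
Proof.
rewrite /fgw_cost; congr (_ * _ + _ * _).
  apply: eq_bigr => i _; under eq_bigr => j _ do rewrite DhE mulrnAr.
  by rewrite sum_kronecker mulr_suml; apply: eq_bigr => k _; rewrite mulrC.
apply: eq_bigr => i _; apply: eq_bigr => j _.
under eq_bigr => k _ do under eq_bigr => l _ do rewrite !DhE !mulrnAr mulrnAl.
under eq_bigr => k _ do rewrite sum_kronecker.
by rewrite sum_kronecker -mulrA mulrC.
Qed.
End Cost.

Lemma wsumE S m n (X : 'I_S -> 'M[R]_(m, n)) (w : 'cV[R]_S) i j :
  wsum X w i j = \sum_s w s 0 * X s i j.
Proof. by rewrite /wsum summxE; apply: eq_bigr => s _; rewrite mxE. Qed.

Lemma wsumBE S m n (X : 'I_S -> 'M[R]_(m, n)) (w1 w2 : 'cV[R]_S) i j :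
  wsum X w1 i j - wsum X w2 i j = wsum X (w1 - w2) i j.
Proof. by rewrite !wsumE -sumrB; apply: eq_bigr => s _; rewrite !mxE mulrBl. Qed.

Section Barycenters.
Variables (N S d : nat) (Cb : 'I_S -> 'M[R]_N) (Ab : 'I_S -> 'M[R]_(N, d)).
Variable h : 'cV[R]_N.
Hypothesis h_ge0 : forall i, 0 <= h i 0.

Lemma M1_gram p q : M1 Cb h p q =
  \sum_(a : 'I_N * 'I_N) (h a.1 0 * h a.2 0) * (Cb p a.1 a.2 * Cb q a.1 a.2).
Proof.
rewrite mxE frobE; apply: eq_bigr => a _.
by rewrite mul_diag_mx mul_mx_diag !mxE; ring.
Qed.

Lemma M2_gram p q : M2 Ab h p q =
  \sum_(a : 'I_N * 'I_d) h a.1 0 * (Ab p a.1 a.2 * Ab q a.1 a.2).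
Proof.
rewrite mxE frobE; apply: eq_bigr => a _.
by rewrite /Dh_sqrt !mul_diag_mx !mxE mulrACA -expr2 sqr_sqrtr.
Qed.

Lemma qform_M1 x : qform (M1 Cb h) x =
  \sum_i \sum_j (h i 0 * h j 0) * (wsum Cb x i j) ^+ 2.
Proof.
rewrite (qform_gram M1_gram).
rewrite -(pair_bigA _ (fun i j => h i 0 * h j 0 * (\sum_p x p 0 * Cb p i j) ^+ 2)).
by apply: eq_bigr => i _; apply: eq_bigr => j _; rewrite wsumE.
Qed.

Lemma qform_M2 x : qform (M2 Ab h) x =
  \sum_i \sum_k h i 0 * (wsum Ab x i k) ^+ 2.
Proof.
rewrite (qform_gram M2_gram).
rewrite -(pair_bigA _ (fun i k => h i 0 * (\sum_p x p 0 * Ab p i k) ^+ 2)).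
by apply: eq_bigr => i _; apply: eq_bigr => k _; rewrite wsumE.
Qed.

Lemma fgw_cost_Dh_wsum alpha w1 w2 :
  fgw_cost alpha (wsum Cb w1) (wsum Ab w1) (wsum Cb w2) (wsum Ab w2) (Dh h) =
  qform (alpha *: M1 Cb h + (1 - alpha) *: M2 Ab h) (w1 - w2).
Proof.
rewrite fgw_cost_Dh qform_lincomb qform_M1 qform_M2 addrC.
by congr (_ * _ + _ * _); do 2!apply: eq_bigr => ? _; rewrite wsumBE.
Qed.

End Barycenters.

End FusedGromovWasserstein.

Theorem proposition4 (R : realType) (N S d : nat) (alpha : R)
  (Cb : 'I_S -> 'M[R]_N) (Ab : 'I_S -> 'M[R]_(N, d)) (h : 'cV[R]_N) :
  (0 < N)%N -> (0 < S)%N -> (0 < d)%N ->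
  0 < alpha < 1 ->
  (forall s, (Cb s)^T = Cb s) ->
  h \in @simplex R N ->
  let Ma := alpha *: M1 Cb h + (1 - alpha) *: M2 Ab h in
  [/\ psd (M1 Cb h), psd (M2 Ab h), psd Ma &
   forall w1 w2 : 'cV[R]_S, w1 \in @simplex R S -> w2 \in @simplex R S ->
     FGW2 alpha (wsum Cb w1) (wsum Ab w1) (wsum Cb w2) (wsum Ab w2) h
       <= mnorm Ma (w1 - w2)].
Proof.
move=> _ _ _ /andP[alpha_gt0 alpha_lt1] _; rewrite in_setE => -[h_ge0 _] Ma.
have psdM1 : psd (M1 Cb h).
  exact: gram_psd (M1_gram Cb h) (fun a => mulr_ge0 (h_ge0 a.1) (h_ge0 a.2)).
have psdM2 : psd (M2 Ab h).
  exact: gram_psd (M2_gram Ab h_ge0) (fun a => h_ge0 a.1).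
split => // [|w1 w2 _ _].
  by apply: psd_lincomb; rewrite ?subr_ge0 ?ltW.
rewrite /mnorm -/(qform Ma _) -fgw_cost_Dh_wsum //.
by apply: FGW2_le_cost (Dh_coupling h_ge0); rewrite !ltW.
Qed.
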